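(* Let $\Sigma$ be a set of prime numbers, $S$ the multiplicative submonoid of $\mathbb{N}$ generated by $\Sigma$, $\mathbb{Z}[S^{-1}]\subset\mathbb{Q}$ the localization. Let $M$ be a locally compact topological $\mathbb{Z}[S^{-1}]$-module that contains a compact open subgroup and is compactly generated. Then $M\cong(\mathbb{Z}[S^{-1}])^k\times C(M)$ as topological $\mathbb{Z}[S^{-1}]$-modules for some $k\ge 0$, where $(\mathbb{Z}[S^{-1}])^k$ is discrete.
   Context: All topological groups are Hausdorff; $\mathbb{Z}[S^{-1}]$ is discrete; scalar multiplication is continuous. Compactly generated means generated as a $\mathbb{Z}[S^{-1}]$-module by a compact subset. $C(M)$ is the set of elements $x\in M$ such that the closure of the subgroup generated by $x$ is compact (a closed submodule). *)

From HB Require Import structures.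
From mathcomp Require Import all_boot all_order all_algebra.
From mathcomp Require Import all_classical all_reals all_analysis.
Set Implicit Arguments. Unset Strict Implicit. Unset Printing Implicit Defensive.
Import Order.TTheory GRing.Theory Num.Theory.
Local Open Scope classical_set_scope.
Local Open Scope ring_scope.

(* Z[S^-1] as a subring of rat: rationals whose (reduced) denominator has
   all its prime factors in Sig (S = monoid generated by the primes Sig). *)
Definition inZS (Sig : set nat) (q : rat) : Prop :=
  forall p : nat, prime p -> (p %| `|denq q|)%N -> Sig p.

(* A topological Z[S^-1]-module structure on a topological abelian group M,
   given by a scalar action sc (only its values at elements of Z[S^-1]
   matter).  Since Z[S^-1] is discrete, continuity of the scalar
   multiplication Z[S^-1] x M -> M amounts to continuity of each sc a. *)
Record ZSmodule (Sig : set nat) (M : topologicalZmodType)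
    (sc : rat -> M -> M) : Prop := {
  sc1 : forall x, sc 1 x = x;
  scA : forall a b x, inZS Sig a -> inZS Sig b -> sc a (sc b x) = sc (a * b) x;
  scDl : forall a b x, inZS Sig a -> inZS Sig b -> sc (a + b) x = sc a x + sc b x;
  scDr : forall a x y, inZS Sig a -> sc a (x + y) = sc a x + sc a y;
  sc_cont : forall a, inZS Sig a -> continuous (sc a)
}.

Definition loc_compact (M : topologicalType) : Prop :=
  forall x : M, exists2 U : set M, nbhs x U & compact U.

Definition has_compact_open_subgroup (M : topologicalZmodType) : Prop :=
  exists U : set M, [/\ compact U, open U, U 0 &
    forall x y, U x -> U y -> U (x - y)].

Definition ZS_compactly_generated (Sig : set nat) (M : topologicalZmodType)
    (sc : rat -> M -> M) : Prop :=
  exists K : set M, compact K /\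
    forall x : M, exists (n : nat) (a : 'I_n -> rat) (k : 'I_n -> M),
      [/\ forall i, inZS Sig (a i), forall i, K (k i) &
          x = \sum_(i < n) sc (a i) (k i)].

Definition CM (M : topologicalZmodType) : set M :=
  [set x | compact (closure [set x *~ n | n in [set: int]])].
Arguments CM {M}.

From HB Require Import structures.
From mathcomp Require Import all_boot all_order all_algebra.
From mathcomp Require Import all_classical all_reals all_analysis.
From mathcomp Require Import ring.
Import Order.TTheory GRing.Theory Num.Theory.
Local Open Scope classical_set_scope.
Local Open Scope ring_scope.

(* Fix a compact open subgroup U.  An element lies in C(M) exactly when some
   positive multiple of it lies in U, so C := C(M) is an open submodule that
   contains U and is saturated: a x in C with a <> 0 forces x in C.  Finitely
   many translates of U cover the compact generating set, so M/C is a finitely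
   generated torsion-free module over the principal ideal domain Z[S^-1].
   Scaling by a common denominator, coordinates along a maximal independent
   family embed it into Z[S^-1]^k, and a submodule of Z[S^-1]^k is free.  A
   lifted basis e of M/C gives the splitting x |-> (v, x - sum_i v_i e_i),
   where v are the coordinates of x; v is locally constant because it
   vanishes on the open subgroup C. *)

Section LocalizedIntegers.
Context {Sig : set nat}.

Definition inS (s : nat) :=
  (0 < s)%N /\ forall p, prime p -> (p %| s)%N -> Sig p.

Lemma inS1 : inS 1.
Proof. by split=> // p p_pr; rewrite dvdn1 => /eqP p1; rewrite p1 in p_pr. Qed.

Lemma inSM s t : inS s -> inS t -> inS (s * t).
Proof.
move=> [s_gt0 sS] [t_gt0 tS]; split; first by rewrite muln_gt0 s_gt0.
by move=> p p_pr; rewrite Euclid_dvdM // => /orP[]; [apply: sS|apply: tS].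
Qed.

Lemma denq_divz_dvd (z d : int) : d != 0 -> (denq (z%:~R / d%:~R) %| d)%Z.
Proof.
move=> d0; case: divqP => [/eqP|k x k0]; first by rewrite (negPf d0).
by rewrite dvdz_mull.
Qed.

Lemma inZSP q :
  inZS Sig q <-> exists2 s, inS s & exists z : int, q * s%:R = z%:~R.
Proof.
split=> [qS|[s [s_gt0 sS] [z qsE]] p p_pr p_dvd].
  exists `|denq q|%N; first by split; rewrite ?absz_gt0 ?denq_neq0.
  by exists (numq q); rewrite numqE -absz_denq pmulrn.
apply: sS => //; apply: dvdn_trans p_dvd _.
have s_neq0 : (s%:R : rat) != 0 by rewrite pnatr_eq0 -lt0n.
have -> : q = z%:~R / (s%:Z)%:~R by rewrite -qsE pmulrn mulfK.
by rewrite -absz_denq; apply: denq_divz_dvd; rewrite eqz_nat -lt0n.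
Qed.

Lemma inZS_int (z : int) : inZS Sig z%:~R.
Proof. by apply/inZSP; exists 1%N; [exact: inS1|exists z; rewrite mulr1]. Qed.

Lemma inZS_nat (n : nat) : inZS Sig n%:R.
Proof. by rewrite pmulrn; apply: inZS_int. Qed.

Lemma inZS0 : inZS Sig 0. Proof. exact: (inZS_nat 0). Qed.

Lemma inZS1 : inZS Sig 1. Proof. exact: (inZS_nat 1). Qed.

Lemma inZSM a b : inZS Sig a -> inZS Sig b -> inZS Sig (a * b).
Proof.
move=> /inZSP[s sS [z az]] /inZSP[t tS [w bw]].
apply/inZSP; exists (s * t)%N; first exact: inSM.
by exists (z * w); rewrite natrM intrM -az -bw; ring.
Qed.

Lemma inZSD a b : inZS Sig a -> inZS Sig b -> inZS Sig (a + b).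
Proof.
move=> /inZSP[s sS [z az]] /inZSP[t tS [w bw]].
apply/inZSP; exists (s * t)%N; first exact: inSM.
by exists (z * t%:Z + w * s%:Z); rewrite natrM intrD !intrM !pmulrn -az -bw; ring.
Qed.

Lemma inZSN a : inZS Sig a -> inZS Sig (- a).
Proof. by rewrite -mulN1r; apply: inZSM; apply: (inZS_int (-1)). Qed.

Lemma inZSB a b : inZS Sig a -> inZS Sig b -> inZS Sig (a - b).
Proof. by move=> aS bS; apply: inZSD => //; apply: inZSN. Qed.

(* Z[S^-1] is a principal ideal domain; the generator is the least positive
   integer of the ideal, by Bezout. *)
Lemma inZS_principal (P : set rat) :
  P `<=` inZS Sig ->
  (forall a b, P a -> P b -> P (a + b)) ->
  (forall a b, inZS Sig a -> P b -> P (a * b)) ->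
  (exists2 a, P a & a != 0) ->
  exists d, [/\ P d, d != 0 & forall q, P q -> inZS Sig (q / d)].
Proof.
move=> PS PD PM [a Pa a_neq0].
have P_int q : P q -> exists2 s, inS s & exists2 z : int, q * s%:R = z%:~R & P z%:~R.
  move=> Pq; have /inZSP[s sS [z qsE]] := PS q Pq.
  by exists s => //; exists z => //; rewrite -qsE mulrC; apply/PM/Pq/inZS_nat.
have P_abs (z : int) : P z%:~R -> P `|z|%:R.
  rewrite pmulrn abszE; case: (ger0P z) => // _ Pz.
  by rewrite -mulN1r intrM; apply: PM => //; apply: (inZS_int (-1)).
have n_ex : exists n, (0 < n)%N && `[< P n%:R >].
  have [s [s_gt0 _] [z qsE Pz]] := P_int a Pa.
  exists `|z|%N; apply/andP; split; last exact/asboolP/P_abs.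
  rewrite absz_gt0; apply: contraNneq a_neq0 => z0.
  by move: qsE; rewrite z0 mulr0z => /eqP; rewrite mulf_eq0 pnatr_eq0 eqn0Ngt s_gt0 orbF.
case: (ex_minnP n_ex) => d /andP[d_gt0 /asboolP Pd] d_min.
exists d%:R; split => //; first by rewrite pnatr_eq0 -lt0n.
move=> q Pq; have [s sS [z qsE Pz]] := P_int q Pq.
have [u [v uvE]] := Bezoutz d%:Z z.
have Pg : P (gcdz d z)%:~R.
  by rewrite -uvE intrD !intrM; apply: PD; apply: PM => //; apply: inZS_int.
have /dvdnP[m zE] : (d %| `|z|)%N.
  have g_gt0 : (0 < gcdn d `|z|)%N by rewrite gcdn_gt0 d_gt0.
  have /eqP <- : gcdn d `|z| == d.
    rewrite eqn_leq dvdn_leq ?dvdn_gcdl //= d_min // g_gt0.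
    by apply/asboolP; rewrite pmulrn.
  exact: dvdn_gcdr.
apply/inZSP; exists s => //; exists (sgz z * m%:Z).
rewrite mulrAC qsE {1}[z]intEsg zE intrM -pmulrn natrM mulrA mulfK ?pnatr_eq0 -?lt0n //.
by rewrite intrM pmulrn.
Qed.

End LocalizedIntegers.

Section ScaleTheory.
Context {Sig : set nat} {M : topologicalZmodType} {sc : rat -> M -> M}.
Hypothesis scZ : ZSmodule Sig sc.

Lemma sc0l x : sc 0 x = 0.
Proof.
apply: (addrI (sc 0 x)); rewrite addr0 -(scDl scZ) ?addr0 //; exact: inZS0.
Qed.

Lemma sc0r a : inZS Sig a -> sc a 0 = 0.
Proof. by move=> aS; apply: (addrI (sc a 0)); rewrite addr0 -(scDr scZ) ?addr0. Qed.

Lemma scNl a x : inZS Sig a -> sc (- a) x = - sc a x.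
Proof.
move=> aS; apply: (addrI (sc a x)); rewrite subrr -(scDl scZ) ?subrr ?sc0l //.
exact: inZSN.
Qed.

Lemma scNr a x : inZS Sig a -> sc a (- x) = - sc a x.
Proof.
by move=> aS; apply: (addrI (sc a x)); rewrite subrr -(scDr scZ) // subrr sc0r.
Qed.

Lemma scBr a x y : inZS Sig a -> sc a (x - y) = sc a x - sc a y.
Proof. by move=> aS; rewrite (scDr scZ) // scNr. Qed.

Lemma sc_nat n x : sc n%:R x = x *+ n.
Proof.
elim: n => [|n IHn]; first by rewrite sc0l.
rewrite mulrSr (scDl scZ); [|exact: inZS_nat|exact: inZS1].
by rewrite IHn (sc1 scZ) mulrSr.
Qed.

Lemma sc_int (z : int) x : sc z%:~R x = x *~ z.
Proof.
case: z => n; first exact: sc_nat.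
by rewrite NegzE mulrNz scNl ?sc_nat //; exact: inZS_nat.
Qed.

Lemma sc_mulz a x (z : int) : inZS Sig a -> sc a (x *~ z) = sc a x *~ z.
Proof.
move=> aS; have zS : inZS Sig z%:~R := inZS_int z.
by rewrite -[x *~ z]sc_int -[sc a x *~ z]sc_int !(scA scZ) // mulrC.
Qed.

Lemma sc_sum a n (F : 'I_n -> M) :
  inZS Sig a -> sc a (\sum_(i < n) F i) = \sum_(i < n) sc a (F i).
Proof.
by move=> aS; apply: big_morph; [by move=> x y; exact: (scDr scZ)|exact: sc0r].
Qed.

End ScaleTheory.

Definition vcons {T} {k} (y : T) (e : 'I_k -> T) : 'I_k.+1 -> T :=
  fun i => if unlift ord0 i is Some j then e j else y.

Lemma vcons0 {T k} (y : T) (e : 'I_k -> T) : vcons y e ord0 = y.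
Proof. by rewrite /vcons unlift_none. Qed.

Lemma vcons_lift {T k} (y : T) (e : 'I_k -> T) j : vcons y e (lift ord0 j) = e j.
Proof. by rewrite /vcons liftK. Qed.

Lemma vconsE {T k} (x : 'I_k.+1 -> T) : vcons (x ord0) (fun j => x (lift ord0 j)) = x.
Proof. by apply/funext => i; rewrite /vcons; case: unliftP => [j|] ->. Qed.

Lemma continuous_addr {M : topologicalZmodType} (c : M) : continuous (fun y : M => y + c).
Proof.
move=> x; apply: (continuous_comp (f := fun y => (y, c)) _ (@add_continuous M _)).
exact: cvg_pair cvg_id (cvg_cst c).
Qed.

Section ModuloC.
Context {Sig : set nat} {M : topologicalZmodType} {sc : rat -> M -> M} {C : set M}.
Hypothesis scZ : ZSmodule Sig sc.
Hypotheses (C0 : C 0) (CB : forall x y, C x -> C y -> C (x - y)).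
Hypothesis Csc : forall a x, inZS Sig a -> C x -> C (sc a x).

(* M/C is never formed: span_mod, independent_mod and basis_mod describe
   spans, independence and bases of images in M/C, and submodule_mod L says
   that L is a submodule containing C.  coord e x is only meaningful when
   span_mod e x holds. *)

Definition ZSvec {k} (c : 'I_k -> rat) := forall i, inZS Sig (c i).

Definition comb {k} (c : 'I_k -> rat) (e : 'I_k -> M) := \sum_(i < k) sc (c i) (e i).

Definition span_mod {k} (e : 'I_k -> M) : set M :=
  [set z | exists2 c, ZSvec c & C (z - comb c e)].

Definition submodule_mod (L : set M) :=
  [/\ C `<=` L, forall x y, L x -> L y -> L (x + y)
    & forall a x, inZS Sig a -> L x -> L (sc a x)].

Definition independent_mod {k} (e : 'I_k -> M) :=
  forall c, ZSvec c -> C (comb c e) -> forall i, c i = 0.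

Definition basis_mod (L : set M) {k} (e : 'I_k -> M) :=
  [/\ forall i, L (e i), L `<=` span_mod e & independent_mod e].

Definition coord {k} (e : 'I_k -> M) (x : M) : 'I_k -> rat :=
  xget (fun=> 0) [set c | ZSvec c /\ C (x - comb c e)].

Lemma CN x : C x -> C (- x).
Proof. by rewrite -sub0r; apply: CB. Qed.

Lemma CD x y : C x -> C y -> C (x + y).
Proof. by move=> Cx Cy; rewrite -[y]opprK; apply/CB/CN. Qed.

Lemma ZSvec_vcons {k} t (c : 'I_k -> rat) : inZS Sig t -> ZSvec c -> ZSvec (vcons t c).
Proof.
by move=> tS cS i; case: (unliftP ord0 i) => [j|] ->; rewrite ?vcons_lift ?vcons0.
Qed.

Lemma combD {k} (c d : 'I_k -> rat) e : ZSvec c -> ZSvec d ->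
  comb (fun i => c i + d i) e = comb c e + comb d e.
Proof.
by move=> cS dS; rewrite -big_split; apply: eq_bigr => i _; rewrite (scDl scZ).
Qed.

Lemma combN {k} (c : 'I_k -> rat) e : ZSvec c -> comb (fun i => - c i) e = - comb c e.
Proof. by move=> cS; rewrite -sumrN; apply: eq_bigr => i _; rewrite (scNl scZ). Qed.

Lemma combZ {k} a (c : 'I_k -> rat) e : inZS Sig a -> ZSvec c ->
  comb (fun i => a * c i) e = sc a (comb c e).
Proof.
by move=> aS cS; rewrite (sc_sum scZ) //; apply: eq_bigr => i _; rewrite (scA scZ).
Qed.

Lemma comb0 {k} (e : 'I_k -> M) : comb (fun=> 0) e = 0.
Proof. by rewrite /comb big1 // => i _; rewrite (sc0l scZ). Qed.

Lemma comb_vcons {k} (c : 'I_k.+1 -> rat) y e :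
  comb c (vcons y e) = sc (c ord0) y + comb (fun j => c (lift ord0 j)) e.
Proof.
rewrite /comb big_ord_recl vcons0; congr (_ + _).
by apply: eq_bigr => j _; rewrite vcons_lift.
Qed.

Section Submodule.
Context {L : set M}.
Hypothesis Lsub : submodule_mod L.

Lemma submod_C : C `<=` L. Proof. by case: Lsub. Qed.

Lemma submodD x y : L x -> L y -> L (x + y). Proof. by case: Lsub => _ + _; apply. Qed.

Lemma submod_sc a x : inZS Sig a -> L x -> L (sc a x).
Proof. by case: Lsub => _ _; apply. Qed.

Lemma submodB x y : L x -> L y -> L (x - y).
Proof.
move=> Lx Ly; have m1S : inZS Sig (-1) by apply/inZSN/inZS1.
by rewrite -[y](sc1 scZ) -(scNl scZ) //; apply/submodD/submod_sc.
Qed.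

Lemma submod_comb {k} {c : 'I_k -> rat} {e : 'I_k -> M} :
  ZSvec c -> (forall i, L (e i)) -> L (comb c e).
Proof.
move=> cS eL; apply: big_ind => [||i _]; [exact/submod_C|exact: submodD|].
exact: submod_sc.
Qed.

End Submodule.

Lemma submodule_mod_ker {L : set M} {lam : M -> rat} :
  submodule_mod L ->
  (forall x y, L x -> L y -> lam (x + y) = lam x + lam y) ->
  (forall a x, inZS Sig a -> L x -> lam (sc a x) = a * lam x) ->
  (forall x, C x -> lam x = 0) ->
  submodule_mod [set x | L x /\ lam x = 0].
Proof.
move=> Lsub lamD lamZ lamC; split.
- by move=> x Cx; split; [exact: submod_C|exact: lamC].
- by move=> x y [Lx lx] [Ly ly]; split; [exact: submodD|rewrite lamD // lx ly addr0].
- by move=> a x aS [Lx lx]; split; [exact: submod_sc|rewrite lamZ // lx mulr0].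
Qed.

Lemma submodule_mod_span {k} (e : 'I_k -> M) : submodule_mod (span_mod e).
Proof.
split.
- by move=> z Cz; exists (fun=> 0); [move=> i; exact: inZS0|rewrite comb0 subr0].
- move=> x y [c cS Cx] [d dS Cy]; exists (fun i => c i + d i).
    by move=> i; exact: inZSD.
  by rewrite combD // opprD addrACA; exact: CD.
- move=> a x aS [c cS Cx]; exists (fun i => a * c i); first by move=> i; exact: inZSM.
  by rewrite combZ // -(scBr scZ) //; exact: Csc.
Qed.

Lemma span_mod_gen {k} (e : 'I_k -> M) i : span_mod e (e i).
Proof.
exists (fun j => (j == i)%:R); first by move=> j; exact: inZS_nat.
rewrite /comb (bigD1 i) //= eqxx (sc1 scZ) big1 ?addr0 ?subrr // => j /negPf ->.
exact: (sc0l scZ).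
Qed.

Lemma span_mod_vcons {k} y (e : 'I_k -> M) z :
  span_mod (vcons y e) z <-> exists2 s, inZS Sig s & span_mod e (z - sc s y).
Proof.
split=> [[c cS Cz]|[s sS [c cS Cz]]].
  exists (c ord0) => //; exists (fun j => c (lift ord0 j)) => //.
  by rewrite comb_vcons opprD addrA in Cz.
exists (vcons s c); first exact: ZSvec_vcons.
rewrite comb_vcons vcons0 opprD addrA.
suff -> : (fun j => vcons s c (lift ord0 j)) = c by [].
by apply/funext => j; rewrite vcons_lift.
Qed.

Lemma independent_mod_vcons {k} y (e : 'I_k -> M) :
  independent_mod e ->
  (forall u, inZS Sig u -> u != 0 -> ~ span_mod e (sc u y)) ->
  independent_mod (vcons y e).
Proof.
move=> e_ind y_free c cS; rewrite comb_vcons => Cc.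
have c'S : ZSvec (fun j => c (lift ord0 j)) by move=> j.
have c0 : c ord0 = 0.
  apply/eqP/negPn/negP => c0; apply: (y_free (c ord0)) => //.
  exists (fun j => - c (lift ord0 j)); first by move=> j; exact: inZSN.
  by rewrite combN // opprK.
rewrite c0 (sc0l scZ) add0r in Cc.
by move=> i; case: (unliftP ord0 i) => [j|] -> //; exact: e_ind Cc j.
Qed.

Section Coordinates.
Context {k : nat} {e : 'I_k -> M}.
Hypothesis e_ind : independent_mod e.

Lemma coordP {x} : span_mod e x -> ZSvec (coord e x) /\ C (x - comb (coord e x) e).
Proof.
move=> [c cS Cx].
by apply: (@xgetPex _ (fun=> 0) [set c | ZSvec c /\ C (x - comb c e)]); exists c.
Qed.

Lemma coord_eq x c : ZSvec c -> C (x - comb c e) -> coord e x = c.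
Proof.
move=> cS Cx; have [dS Cd] : ZSvec (coord e x) /\ C (x - comb (coord e x) e).
  by apply: coordP; exists c.
have dcS : ZSvec (fun i => coord e x i - c i) by move=> i; exact: inZSB.
have Cdc : C (comb (fun i => coord e x i - c i) e).
  rewrite combD ?combN //; last by move=> i; exact: inZSN.
  have -> : comb (coord e x) e - comb c e = (x - comb c e) - (x - comb (coord e x) e).
    by rewrite opprB [RHS]addrC subrKA.
  exact: CB.
by apply/funext => i; apply/eqP; rewrite -subr_eq0; apply/eqP; exact: e_ind dcS Cdc i.
Qed.

Lemma coordD x y : span_mod e x -> span_mod e y ->
  coord e (x + y) = (fun i => coord e x i + coord e y i).
Proof.
move=> /coordP[xS Cx] /coordP[yS Cy]; apply: coord_eq; first by move=> i; exact: inZSD.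
by rewrite combD // opprD addrACA; exact: CD.
Qed.

Lemma coordZ a x : inZS Sig a -> span_mod e x ->
  coord e (sc a x) = (fun i => a * coord e x i).
Proof.
move=> aS /coordP[xS Cx]; apply: coord_eq; first by move=> i; exact: inZSM.
by rewrite combZ // -(scBr scZ) //; exact: Csc.
Qed.

Lemma coordC x : C x -> coord e x = (fun=> 0).
Proof. by move=> Cx; apply: coord_eq; [move=> i; exact: inZS0|rewrite comb0 subr0]. Qed.

End Coordinates.

Lemma basis_mod_vcons (L : set M) (lam : M -> rat) {k} y (e : 'I_k -> M) :
  submodule_mod L ->
  (forall x z, L x -> L z -> lam (x + z) = lam x + lam z) ->
  (forall a x, inZS Sig a -> L x -> lam (sc a x) = a * lam x) ->
  (forall x, C x -> lam x = 0) ->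
  L y -> lam y != 0 -> (forall x, L x -> inZS Sig (lam x / lam y)) ->
  basis_mod [set x | L x /\ lam x = 0] e -> basis_mod L (vcons y e).
Proof.
move=> Lsub lamD lamZ lamC Ly y_neq0 y_gen [eL' L'e e_ind].
have L'sub := submodule_mod_ker Lsub lamD lamZ lamC.
split.
- move=> i; case: (unliftP ord0 i) => [j|] ->; rewrite ?vcons_lift ?vcons0 //.
  by case: (eL' j).
- move=> x Lx; apply/span_mod_vcons; exists (lam x / lam y); first exact: y_gen.
  have tS : inZS Sig (- (lam x / lam y)) by apply/inZSN/y_gen.
  apply: L'e; split; first by apply: submodB => //; apply: submod_sc => //; exact: y_gen.
  rewrite -(scNl scZ); last exact: y_gen.
  by rewrite lamD ?lamZ //; [rewrite mulNr divfK // subrr|exact: submod_sc].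
- move=> c cS; rewrite comb_vcons => Cc.
  have c'S : ZSvec (fun j => c (lift ord0 j)) by move=> j.
  have [Lc lc] := submod_comb L'sub c'S (fun j => eL' j).
  have c0 : c ord0 = 0.
    have /eqP := lamC _ Cc; rewrite lamD ?lamZ ?lc ?addr0 //; last exact: submod_sc.
    by rewrite mulf_eq0 (negPf y_neq0) orbF => /eqP.
  rewrite c0 (sc0l scZ) add0r in Cc.
  by move=> i; case: (unliftP ord0 i) => [j|] -> //; exact: e_ind Cc j.
Qed.

(* Induction on the number of functionals: the kernel of the first one has a
   basis, and a generator of its (principal) image extends it. *)
Lemma basis_of_functionals r (L : set M) (phi : 'I_r -> M -> rat) :
  submodule_mod L ->
  (forall j x z, L x -> L z -> phi j (x + z) = phi j x + phi j z) ->
  (forall j a x, inZS Sig a -> L x -> phi j (sc a x) = a * phi j x) ->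
  (forall j x, C x -> phi j x = 0) ->
  (forall j x, L x -> inZS Sig (phi j x)) ->
  (forall x, L x -> (forall j, phi j x = 0) -> C x) ->
  exists k (e : 'I_k -> M), basis_mod L e.
Proof.
elim: r L phi => [|r IHr] L phi Lsub phiD phiZ phiC phiS phiK.
  exists 0%N, (fun=> 0); split=> [[]//|x Lx|c _ _ []//].
  by exists (fun=> 0) => [[]//|]; rewrite /comb big_ord0 subr0; apply: phiK => // -[].
pose lam := phi ord0.
have L'sub := submodule_mod_ker Lsub (phiD ord0) (phiZ ord0) (phiC ord0).
have [k [e e_basis]] : exists k (e : 'I_k -> M), basis_mod [set x | L x /\ lam x = 0] e.
  apply: (IHr _ (fun j => phi (lift ord0 j))) => //.
  - by move=> j x z [Lx _] [Lz _]; exact: phiD.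
  - by move=> j a x aS [Lx _]; exact: phiZ.
  - by move=> j; exact: phiC.
  - by move=> j x [Lx _]; exact: phiS.
  - move=> x [Lx lx] phix; apply: phiK => // j.
    by case: (unliftP ord0 j) => [j'|] ->; [exact: phix|exact: lx].
case: (pselect (exists2 y, L y & lam y != 0)) => [[y Ly y_neq0]|lam0]; last first.
  exists k, e; case: e_basis => eL' L'e e_ind.
  split=> // [i|x Lx]; first by case: (eL' i).
  by apply: L'e; split=> //; apply/eqP/negPn/negP => lx; apply: lam0; exists x.
pose I := [set lam x | x in L].
have [d [[y' Ly' <-] d_neq0 d_gen]] :
    exists d, [/\ I d, d != 0 & forall q, I q -> inZS Sig (q / d)].
  apply: inZS_principal.
  - by move=> _ [x Lx <-]; exact: phiS.
  - by move=> _ _ [x Lx <-] [z Lz <-]; exists (x + z); [exact: submodD|exact: phiD].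
  - by move=> a _ aS [x Lx <-]; exists (sc a x); [exact: submod_sc|exact: phiZ].
  - by exists (lam y) => //; exists y.
exists k.+1, (vcons y' e); apply: basis_mod_vcons e_basis => //.
- exact: phiD.
- exact: phiZ.
- exact: phiC.
- by move=> x Lx; apply: d_gen; exists x.
Qed.

(* Greedy choice of an independent subfamily: each further generator either
   extends it or has a nonzero multiple in its span. *)
Lemma independent_mod_scaled_span {m} (x : 'I_m -> M) :
  exists k (e : 'I_k -> M) t, [/\ independent_mod e, inZS Sig t, t != 0 &
    forall z, span_mod x z -> span_mod e (sc t z)].
Proof.
elim: m x => [|m IHm] x.
  exists 0%N, x, 1; split=> [c _ _ []//||//|z]; first exact: inZS1.
  by rewrite (sc1 scZ).
rewrite -(vconsE x); set y := x ord0; set x' := fun j => x (lift ord0 j).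
have [k [e [t [e_ind tS t_neq0 x'e]]]] := IHm x'.
have eL := submodule_mod_span e.
case: (pselect (exists u, [/\ inZS Sig u, u != 0 & span_mod e (sc u y)]))
  => [[u [uS u_neq0 yu]]|y_free].
  exists k, e, (u * t); split=> //; [exact: inZSM|by rewrite mulf_neq0|].
  move=> z /span_mod_vcons[s sS /x'e z'e].
  rewrite -(subrK (sc s y) z) (scDr scZ); last exact: inZSM.
  apply: (submodD eL); first by rewrite -(scA scZ) //; exact: submod_sc.
  have tsS : inZS Sig (t * s) by exact: inZSM.
  rewrite (scA scZ) //; last exact: inZSM.
  rewrite (_ : u * t * s = t * s * u); last by ring.
  by rewrite -(scA scZ) //; exact: submod_sc.
exists k.+1, (vcons y e), t; split=> //.
  apply: independent_mod_vcons => // u uS u_neq0 yu.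
  by apply: y_free; exists u.
move=> z /span_mod_vcons[s sS z'].
apply/span_mod_vcons; exists (t * s); first exact: inZSM.
by rewrite -(scA scZ) // -(scBr scZ) //; exact: x'e.
Qed.

Hypothesis Csat : forall a x, inZS Sig a -> a != 0 -> C (sc a x) -> C x.

Lemma span_mod_basis {m} (x : 'I_m -> M) :
  exists k (e : 'I_k -> M), basis_mod (span_mod x) e.
Proof.
have [k [e [t [e_ind tS t_neq0 xe]]]] := independent_mod_scaled_span x.
have xL := submodule_mod_span x.
apply: (@basis_of_functionals k _ (fun i z => coord e (sc t z) i)) => //.
- by move=> i z w zx wx; rewrite (scDr scZ) // coordD //; exact: xe.
- move=> i a z aS zx; rewrite (scA scZ) // mulrC -(scA scZ) //.
  by rewrite coordZ //; exact: xe.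
- by move=> i z Cz; rewrite coordC //; exact: Csc.
- by move=> i z zx; have [] := coordP (xe z zx).
- move=> z zx coord0; apply: (Csat _ _ tS t_neq0).
  have [_] := coordP (xe z zx).
  have -> : coord e (sc t z) = fun=> 0 by apply/funext; exact: coord0.
  by rewrite comb0 subr0.
Qed.

Section Decomposition.
Context {k : nat} {e : 'I_k -> M}.
Hypotheses (e_ind : independent_mod e) (e_span : forall x, span_mod e x).
Hypothesis C_open : forall x : M, \forall y \near x, C (y - x).

Lemma coord_locally_constant x : \forall y \near x, coord e y = coord e x.
Proof.
apply: filterS (C_open x) => y Cyx.
have [yxS xS] := (e_span (y - x), e_span x).
by rewrite -[y](subrK x) coordD // coordC //; apply/funext => i; rewrite add0r.
Qed.

Lemma decomposition_mod :
  exists (f : M -> 'I_k -> rat) (g : M -> M) (Psi : ('I_k -> rat) -> M -> M),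
    [/\ forall x, (forall i, inZS Sig (f x i)) /\ C (g x),
        (forall x y i, f (x + y) i = f x i + f y i) /\
        (forall x y, g (x + y) = g x + g y) /\
        (forall a x, inZS Sig a ->
          (forall i, f (sc a x) i = a * f x i) /\ g (sc a x) = sc a (g x)),
        (forall x, Psi (f x) (g x) = x) /\
        (forall v c, (forall i, inZS Sig (v i)) -> C c ->
          f (Psi v c) = v /\ g (Psi v c) = c),
        (forall x, \forall y \near x, f y = f x) /\ continuous g &
        forall v, (forall i, inZS Sig (v i)) -> {within C, continuous (Psi v)}].
Proof.
have coord_add x y : coord e (x + y) = (fun i => coord e x i + coord e y i).
  by apply: coordD; last exact: e_span.
have coord_scale a x : inZS Sig a -> coord e (sc a x) = (fun i => a * coord e x i).
  by move=> aS; apply: coordZ; last exact: e_span.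
exists (coord e), (fun x => x - comb (coord e x) e), (fun v c => c + comb v e).
split.
- by move=> x; exact: coordP.
- split; first by move=> x y i; rewrite coord_add.
  split=> [x y|a x aS].
    have [xS _] := coordP (e_span x); have [yS _] := coordP (e_span y).
    by rewrite coord_add combD // opprD addrACA.
  have [xS _] := coordP (e_span x).
  by split=> [i|]; rewrite coord_scale // combZ // (scBr scZ).
- split=> [x|v c vS Cc]; first by rewrite subrK.
  have -> : coord e (c + comb v e) = v by apply: coord_eq => //; rewrite addrK.
  by rewrite addrK.
- split=> [|x]; first exact: coord_locally_constant.
  have g_near : {near x, (fun y => y - comb (coord e x) e) =1
                         (fun y => y - comb (coord e y) e)}.
    by apply: filterS (coord_locally_constant x) => y /= ->.
  apply: cvg_trans (near_eq_cvg g_near) _; exact: continuous_addr.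
- by move=> v vS; apply: continuous_subspaceT; exact: continuous_addr.
Qed.

End Decomposition.
End ModuloC.

Arguments ZSvec Sig {k} c.
Arguments comb {M} sc {k} c e.
Arguments span_mod Sig {M} sc C {k} e _.
Arguments submodule_mod Sig {M} sc C L.
Arguments independent_mod Sig {M} sc C {k} e.
Arguments basis_mod Sig {M} sc C L {k} e.
Arguments coord Sig {M} sc C {k} e x.


Lemma CM_sc {Sig : set nat} {M : topologicalZmodType} {sc : rat -> M -> M} a x :
  hausdorff_space M -> ZSmodule Sig sc -> inZS Sig a -> CM x -> CM (sc a x).
Proof.
move=> hM scZ aS; rewrite /CM /=; set H := closure _ => H_compact.
have aH_compact : compact (sc a @` H).
  apply: continuous_compact H_compact; apply: continuous_subspaceT.
  exact: (sc_cont scZ).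
eapply subclosed_compact; [exact: closed_closure|exact: aH_compact|].
rewrite [X in _ `<=` X](closure_id (sc a @` H)).1; last exact: compact_closed.
apply: closureS => _ [z _ <-]; exists (x *~ z); last by rewrite (sc_mulz scZ).
by apply: subset_closure; exists z.
Qed.

Section CompactOpenSubgroup.
Context {M : topologicalZmodType} {U : set M}.
Hypotheses (U0 : U 0) (UB : forall x y, U x -> U y -> U (x - y)).

Lemma subgroupN x : U x -> U (- x).
Proof. by rewrite -sub0r; apply: UB. Qed.

Lemma subgroupD x y : U x -> U y -> U (x + y).
Proof. by move=> Ux Uy; rewrite -[y]opprK; apply/UB/subgroupN. Qed.

Lemma subgroupMn x n : U x -> U (x *+ n).
Proof. by move=> Ux; elim: n => [|n IHn]; rewrite ?mulr0n // mulrS; apply: subgroupD. Qed.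

Lemma subgroupMz x z : U x -> U (x *~ z).
Proof.
move=> Ux; case: z => n; first exact: subgroupMn.
by rewrite NegzE mulrNz; apply/subgroupN/subgroupMn.
Qed.

Hypothesis Uo : open U.

Lemma near_subgroup (x : M) : \forall y \near x, U (y - x).
Proof.
have : nbhs (x - x) U by rewrite subrr; apply: open_nbhs_nbhs.
by move/(continuous_addr (- x) x).
Qed.

(* A cluster point z of the multiples of x is approached by two of them,
   whose difference is then a positive multiple in U. *)
Lemma CM_mulrn x : CM x -> exists2 n, (0 < n)%N & U (x *+ n).
Proof.
rewrite /CM /=; set H := closure _ => H_compact.
have FH : \forall n \near \oo, H (x *+ n).
  by apply: nearW => n; apply: subset_closure; exists n%:Z.
have [z [_ z_cluster]] := H_compact ((fun n : nat => x *+ n) @ \oo) _ FH.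
have F1 : \forall n \near \oo, [set x *+ m | m in [set: nat]] (x *+ n).
  by apply: nearW => n; exists n.
have [_ [[n1 _ <-] zn1]] := z_cluster _ _ F1 (near_subgroup z).
have F2 : \forall n \near \oo, [set x *+ m | m in [set m | (n1 < m)%N]] (x *+ n).
  by exists n1.+1 => // n /= n1n; exists n.
have [_ [[n2 n1n2 <-] zn2]] := z_cluster _ _ F2 (near_subgroup z).
exists (n2 - n1)%N; first by rewrite subn_gt0.
by have := UB _ _ zn2 zn1; rewrite opprB addrA subrK -mulrnBr // ltnW.
Qed.

Hypothesis Uc : compact U.

Lemma compact_translate c : compact [set y | U (y - c)].
Proof.
have -> : [set y | U (y - c)] = (fun y => y + c) @` U.
  apply/seteqP; split=> [y Uy|_ [y Uy <-]]; last by rewrite /= addrK.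
  by exists (y - c) => //; rewrite subrK.
by apply: continuous_compact => //; apply: continuous_subspaceT; exact: continuous_addr.
Qed.

Lemma compact_translates x n :
  compact [set y | exists2 r, (r < n)%N & U (y - x *+ r)].
Proof.
elim: n => [|n IHn].
  by rewrite (_ : [set _ | _] = set0); [exact: compact0|apply/seteqP; split=> y // []].
rewrite (_ : [set _ | _] = [set y | exists2 r, (r < n)%N & U (y - x *+ r)]
                            `|` [set y | U (y - x *+ n)]).
  exact: compactU IHn (compact_translate _).
apply/seteqP; split=> y.
  by move=> [r]; rewrite ltnS leq_eqVlt => /orP[/eqP->|r_lt]; [right|left; exists r].
by case=> [[r r_lt Uy]|Uy]; [exists r => //; exact: ltnW|exists n].
Qed.

Hypothesis hM : hausdorff_space M.

(* The subgroup generated by x lies in the compact union of the translates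
   x *+ r + U, r < n. *)
Lemma mulrn_CM x n : (0 < n)%N -> U (x *+ n) -> CM x.
Proof.
move=> n_gt0 Uxn; have F_compact := compact_translates x n.
eapply subclosed_compact; [exact: closed_closure|exact: F_compact|].
rewrite [X in _ `<=` X](closure_id _).1; last exact: compact_closed.
apply: closureS => _ [z _ <-].
have n_neq0 : n%:Z != 0 by rewrite eqz_nat -lt0n.
exists `|(z %% n%:Z)%Z|%N.
  by rewrite -ltz_nat gez0_abs ?modz_ge0 ?ltz_pmod.
rewrite pmulrn gez0_abs ?modz_ge0 // {1}(divz_eq z n%:Z) mulrzDr addrK.
by rewrite mulrC mulrzA -pmulrn; apply: subgroupMz.
Qed.

Lemma subgroup_CM : U `<=` @CM M.
Proof. by move=> x Ux; apply: (@mulrn_CM x 1). Qed.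

Lemma CMB (x y : M) : CM x -> CM y -> CM (x - y).
Proof.
move=> /CM_mulrn[n n_gt0 Uxn] /CM_mulrn[m m_gt0 Uym].
apply: (@mulrn_CM _ (n * m)); first by rewrite muln_gt0 n_gt0.
rewrite mulrnBl mulrnA; apply: UB; first exact: subgroupMn.
by rewrite mulnC mulrnA; exact: subgroupMn.
Qed.

Lemma CM_mulz_inv (x : M) (z : int) : z != 0 -> CM (x *~ z) -> CM x.
Proof.
move=> z_neq0 /CM_mulrn[n n_gt0]; case: z z_neq0 => m m_neq0 Uxzn.
  by apply: (@mulrn_CM _ (m * n)); rewrite ?mulrnA // muln_gt0 n_gt0 lt0n m_neq0.
apply: (@mulrn_CM _ (m.+1 * n)); first by rewrite muln_gt0 n_gt0.
by rewrite mulrnA -[x *+ m.+1]opprK mulNrn; apply: subgroupN.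
Qed.

Lemma CM_sat {Sig : set nat} {sc : rat -> M -> M} a x : ZSmodule Sig sc ->
  inZS Sig a -> a != 0 -> CM (sc a x) -> CM x.
Proof.
move=> scZ aS a_neq0 /(CM_sc (denq a)%:~R _ hM scZ (inZS_int _)).
rewrite (scA scZ); [|exact: inZS_int|by []].
have -> : (denq a)%:~R * a = (numq a)%:~R by rewrite numqE mulrC.
by rewrite (sc_int scZ); apply: CM_mulz_inv; rewrite numq_eq0.
Qed.

End CompactOpenSubgroup.

Lemma compact_translates_cover {M : topologicalZmodType} {K U : set M} :
  compact K -> open U -> U 0 ->
  exists s : seq M, forall k, K k -> exists2 x, x \in s & U (k - x).
Proof.
move=> /compact_near_coveringP K_cover Uo U0.
pose F := filter_from [set: seq M] (fun s0 => [set s : seq M | {subset s0 <= s}]).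
have FF : Filter F.
  apply: filter_from_filter; first by exists [::].
  move=> s1 s2 _ _; exists (s1 ++ s2) => // s s12s.
  by split=> x xs; apply: s12s; rewrite mem_cat xs ?orbT.
have near_cover k :
    K k -> \forall y \near k & s \near F, exists2 x, x \in s & U (y - x).
  move=> _; exists ([set y | U (y - k)], [set s : seq M | k \in s]) => /=.
    by split; [exact: near_subgroup|exists [:: k] => // s; apply; rewrite inE].
  by move=> [y s] [/= Uyk ks]; exists k.
have [s _ s_cover] := K_cover _ F _ FF near_cover.
by exists s; apply: s_cover.
Qed.

Theorem mainTheorem12 (Sig : set nat) (M : topologicalZmodType)
    (sc : rat -> M -> M) :
  (forall p, Sig p -> prime p) ->
  hausdorff_space M ->
  ZSmodule Sig sc ->
  loc_compact M ->
  has_compact_open_subgroup M ->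
  ZS_compactly_generated Sig sc ->
  exists (k : nat) (f : M -> 'I_k -> rat) (g : M -> M)
         (Psi : ('I_k -> rat) -> M -> M),
    [/\ (* Phi maps into Z[S^-1]^k x C(M) *)
        forall x, (forall i, inZS Sig (f x i)) /\ CM (g x),
        (* Phi is Z[S^-1]-linear *)
        (forall x y i, f (x + y) i = f x i + f y i) /\
        (forall x y, g (x + y) = g x + g y) /\
        (forall a x, inZS Sig a ->
          (forall i, f (sc a x) i = a * f x i) /\ g (sc a x) = sc a (g x)),
        (* Psi is a two-sided inverse of Phi *)
        (forall x, Psi (f x) (g x) = x) /\
        (forall v c, (forall i, inZS Sig (v i)) -> CM c ->
          f (Psi v c) = v /\ g (Psi v c) = c),
        (* Phi continuous (f locally constant: discrete target) *)
        (forall x, \forall y \near x, f y = f x) /\ continuous g &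
        (* Psi continuous (first factor discrete) *)
        forall v, (forall i, inZS Sig (v i)) -> {within CM, continuous (Psi v)}].
Proof.
(* Non-primes in Sig do not affect inZS, and local compactness follows from
   the compact open subgroup. *)
move=> _ hM scZ _ [U [Uc Uo U0 UB]] [K [Kc K_gen]].
have UCM : U `<=` CM := subgroup_CM U0 UB Uc hM.
have CM0 : CM (0 : M) := UCM _ U0.
have CM_sub : forall x y : M, CM x -> CM y -> CM (x - y) := CMB U0 UB Uo Uc hM.
have CM_scale a (x : M) : inZS Sig a -> CM x -> CM (sc a x) := CM_sc a x hM scZ.
have CM_saturated a (x : M) : inZS Sig a -> a != 0 -> CM (sc a x) -> CM x :=
  CM_sat U0 UB Uo Uc hM a x scZ.
have [s K_cover] := compact_translates_cover Kc Uo U0.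
pose x (i : 'I_(size s)) := nth 0 s i.
have x_span := submodule_mod_span scZ CM0 CM_sub CM_scale x.
have [k [e [_ e_span e_ind]]] := span_mod_basis scZ CM0 CM_sub CM_scale CM_saturated x.
exists k; apply: (decomposition_mod scZ CM0 CM_sub CM_scale e_ind) => z; last first.
  by apply: filterS (near_subgroup U0 Uo z) => y /UCM.
apply: e_span; have [n [a [k' [aS Kk ->]]]] := K_gen z.
apply: (submod_comb CM0 x_span) => // i; have [y ys Uk'y] := K_cover _ (Kk i).
have yi : (index y s < size s)%N by rewrite index_mem.
have -> : k' i = (k' i - y) + x (Ordinal yi) by rewrite /x /= nth_index ?subrK.
apply: (submodD x_span); first exact/(submod_C x_span)/UCM.
exact: (span_mod_gen scZ CM0 x (Ordinal yi)).
Qed.
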